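(* Let $G=(V,E)$ be a 2-tree. Then $G$ contains no split independent set; that is, there is no set $S\subseteq V$ such that $S$ is independent in $G$ and the induced subgraph $\langle V\setminus S\rangle$ is either disconnected or isomorphic to $K_1$.
   Context: All graphs are finite, simple (no loops or multiple edges) and undirected. A 2-tree is a graph obtained from the triangle $K_3$ by repeatedly adding a new vertex adjacent to exactly the two endpoints of some existing edge. For $X\subseteq V$, $\langle X\rangle$ denotes the subgraph of $G$ induced by $X$. A set $S\subseteq V$ is a split independent set if $S$ is independent (no two vertices of $S$ are adjacent) and $\langle V\setminus S\rangle$ is either disconnected or a $K_1$. *)

From mathcomp Require Import all_boot.
Set Implicit Arguments. Unset Strict Implicit. Unset Printing Implicit Defensive.

Definition simple_graph (T : finType) (e : rel T) : Prop :=
  symmetric e /\ irreflexive e.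

(* [two_tree_on e X]: the subgraph of (T,e) induced by X is a 2-tree,
   built from a triangle by repeatedly adding a vertex adjacent to exactly
   the two endpoints of an existing edge. *)
Inductive two_tree_on (T : finType) (e : rel T) : {set T} -> Prop :=
  | tt_triangle (a b c : T) :
      e a b -> e b c -> e a c ->
      two_tree_on e [set a; b; c]
  | tt_add (Y : {set T}) (v u w : T) :
      two_tree_on e Y -> v \notin Y -> u \in Y -> w \in Y -> e u w ->
      [set x in Y | e v x] = [set u; w] ->
      two_tree_on e (v |: Y).

Definition two_tree (T : finType) (e : rel T) : Prop :=
  simple_graph e /\ two_tree_on e [set: T].

Definition induced_rel (T : finType) (e : rel T) (X : {set T}) : rel T :=
  fun x y => [&& x \in X, y \in X & e x y].

Definition disconnected_on (T : finType) (e : rel T) (X : {set T}) : Prop :=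
  exists x y, [/\ x \in X, y \in X & ~~ connect (induced_rel e X) x y].

Definition independent (T : finType) (e : rel T) (S : {set T}) : Prop :=
  forall x y, x \in S -> y \in S -> ~~ e x y.

Definition split_independent (T : finType) (e : rel T) (S : {set T}) : Prop :=
  independent e S /\ (disconnected_on e (~: S) \/ #|~: S| = 1).

From mathcomp Require Import all_boot.

Set Implicit Arguments.
Unset Strict Implicit.
Unset Printing Implicit Defensive.

(* Induction along the construction of a 2-tree X shows that, for every
   independent set S, the vertices of X outside S span a connected induced
   subgraph containing an edge.  The base triangle keeps two adjacent vertices
   outside S; a newly added vertex v outside S is adjacent to the two ends of
   an edge, at most one of which lies in S, so v joins the connected rest. *)

Section TwoTreeComplement.
Variables (T : finType) (e : rel T).

Definition connected_on (X : {set T}) : Prop :=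
  {in X &, forall x y, connect (induced_rel e X) x y}.

Lemma connect_induced_sub (A B : {set T}) (x y : T) : A \subset B ->
  connect (induced_rel e A) x y -> connect (induced_rel e B) x y.
Proof.
move=> sAB; apply: connect_sub => p q /and3P[pA qA epq]; apply: connect1.
by rewrite /induced_rel (subsetP sAB _ pA) (subsetP sAB _ qA) epq.
Qed.

Lemma clique_connected_on (X : {set T}) :
  {in X &, forall x y, x != y -> e x y} -> connected_on X.
Proof.
move=> cliqueX x y xX yX; have [-> | xy] := eqVneq x y; first exact: connect0.
by apply: connect1; rewrite /induced_rel xX yX cliqueX.
Qed.

Lemma connected_on_setU1 (X : {set T}) (v z : T) : symmetric e ->
  connected_on X -> z \in X -> e v z -> connected_on (v |: X).
Proof.
move=> esym connX zX evz.
have symX : connect_sym (induced_rel e (v |: X)).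
  by apply: sym_connect_sym => p q; rewrite /induced_rel esym andbCA.
have reach_v t : t \in v |: X -> connect (induced_rel e (v |: X)) t v.
  case/setU1P=> [-> | tX]; first exact: connect0.
  apply: connect_trans (connect_induced_sub (subsetUr _ _) (connX _ _ tX zX)) _.
  by rewrite symX; apply: connect1; rewrite /induced_rel !inE eqxx zX orbT evz.
by move=> p q pX qX; rewrite (connect_trans (reach_v p pX)) // symX reach_v.
Qed.

Lemma independent_edge (S : {set T}) (x y : T) :
  independent e S -> e x y -> x \in S -> y \notin S.
Proof. by move=> indS exy xS; apply: contraL exy; exact: indS. Qed.

Lemma triangle_clique (a b c : T) : symmetric e -> e a b -> e b c -> e a c ->
  {in [set a; b; c] &, forall x y, x != y -> e x y}.
Proof.
move=> esym eab ebc eac x y; rewrite !inE.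
by do 2![case/orP=> [/orP[] | ] /eqP->]; rewrite ?eqxx // => _; rewrite // esym.
Qed.

Lemma triangle_edge_outside (S : {set T}) (a b c : T) : independent e S ->
  e a b -> e b c -> e a c ->
  exists x y, [/\ x \in [set a; b; c] :\: S, y \in [set a; b; c] :\: S & e x y].
Proof.
move=> indS eab ebc eac.
have [aS | aS] := boolP (a \in S).
  exists b, c; rewrite !inE !eqxx !orbT (independent_edge indS eab aS).
  by rewrite (independent_edge indS eac aS).
have [bS | bS] := boolP (b \in S).
  by exists a, c; rewrite !inE !eqxx !orbT aS (independent_edge indS ebc bS).
by exists a, b; rewrite !inE !eqxx !orbT aS bS.
Qed.

Lemma two_tree_on_triangle (X : {set T}) : two_tree_on e X ->
  exists a b c, [/\ [set a; b; c] \subset X, e a b, e b c & e a c].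
Proof.
elim=> [a b c eab ebc eac | Y v u w _ [a [b [c [sY eab ebc eac]]]] _ _ _ _ _].
  by exists a, b, c; split.
by exists a, b, c; split; rewrite // (subset_trans sY) ?subsetUr.
Qed.

Lemma two_tree_on_edge_outside (X S : {set T}) :
  two_tree_on e X -> independent e S ->
  exists x y, [/\ x \in X :\: S, y \in X :\: S & e x y].
Proof.
move=> /two_tree_on_triangle[a [b [c [sX eab ebc eac]]]] indS.
have [x [y [xS yS exy]]] := triangle_edge_outside indS eab ebc eac.
by exists x, y; rewrite !(subsetP (setSD S sX)).
Qed.

Lemma two_tree_on_connected_outside (X S : {set T}) : symmetric e ->
  two_tree_on e X -> independent e S -> connected_on (X :\: S).
Proof.
move=> esym ttX indS.
elim: ttX => [a b c eab ebc eac | Y v u w _ connY _ uY wY euw NY].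
  apply: clique_connected_on => x y /setDP[xT _] /setDP[yT _].
  exact: triangle_clique esym eab ebc eac _ _ xT yT.
have [vS | vS] := boolP (v \in S).
  suff -> : (v |: Y) :\: S = Y :\: S by [].
  by apply/setP=> t; rewrite !inE; case: eqP => // ->; rewrite vS.
have -> : (v |: Y) :\: S = v |: (Y :\: S).
  by apply/setP=> t; rewrite !inE; case: eqP => // ->; rewrite vS.
have neighbour t : t \in [set u; w] -> e v t by rewrite -NY inE => /andP[].
have [uS | uS] := boolP (u \in S).
  apply: connected_on_setU1 connY _ (neighbour w _); rewrite ?inE ?eqxx ?orbT //.
  by rewrite wY (independent_edge indS euw uS).
by apply: connected_on_setU1 connY _ (neighbour u _); rewrite ?inE ?uS ?eqxx.
Qed.

End TwoTreeComplement.

Theorem mainTheorem1 (T : finType) (e : rel T) :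
  two_tree e -> ~ exists S : {set T}, split_independent e S.
Proof.
move=> [[esym eirr] ttT] [S [indS splitS]].
have connS : connected_on e (~: S).
  by rewrite -setTD; exact: two_tree_on_connected_outside.
have [x [y [xS yS exy]]] := two_tree_on_edge_outside ttT indS.
rewrite setTD in xS yS.
case: splitS => [[p [q [pS qS]]] | cardS]; first by rewrite connS.
have xy : x != y by apply: contraTneq exy => ->; rewrite eirr.
have /cards1P[z Sz] : #|~: S| == 1 by rewrite cardS.
by move: xS yS xy; rewrite Sz !inE => /eqP-> /eqP->; rewrite eqxx.
Qed.
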